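(* The Lehner expansion of an irrational $\alpha\in(1,2)$ is eventually periodic if and only if $\alpha$ is a quadratic irrational.
   Context: The Lehner map on $[1,2)$ is $L(x)=\frac{1}{2-x}$ for $x\in[1,3/2)$ and $L(x)=\frac{1}{x-1}$ for $x\in[3/2,2)$. For irrational $x\in(1,2)$, its Lehner digits are $(a_i,\epsilon_i)=(2,-1)$ if $L^i(x)\in[1,3/2)$ and $(1,+1)$ if $L^i(x)\in[3/2,2)$, and $x=a_0+\cfrac{\epsilon_0}{a_1+\cfrac{\epsilon_1}{a_2+\cdots}}$ is its Lehner expansion. Eventually periodic means the digit sequence $((a_i,\epsilon_i))_{i\ge0}$ is eventually periodic. *)

From Stdlib Require Import Reals ZArith.
Open Scope R_scope.

(* The Lehner map on [1,2): L(x) = 1/(2-x) on [1,3/2), L(x) = 1/(x-1) on [3/2,2).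
   Defined totally on R (values outside [1,2) are irrelevant). *)
Definition lehner_map (x : R) : R :=
  if Rlt_dec x (3/2) then / (2 - x) else / (x - 1).

Definition lehner_digit (x : R) (i : nat) : Z * Z :=
  if Rlt_dec (Nat.iter i lehner_map x) (3/2) then (2%Z, (-1)%Z) else (1%Z, 1%Z).

Definition eventually_periodic {A : Type} (u : nat -> A) : Prop :=
  exists N p : nat, (0 < p)%nat /\ forall i : nat, (N <= i)%nat -> u (i + p)%nat = u i.

Definition irrational (x : R) : Prop :=
  forall p q : Z, q <> 0%Z -> x <> IZR p / IZR q.

Definition quadratic_irrational (x : R) : Prop :=
  irrational x /\
  exists a b c : Z, a <> 0%Z /\ IZR a * x ^ 2 + IZR b * x + IZR c = 0.

From Stdlib Require Import Reals ZArith Lra Lia Psatz List Classical.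
Open Scope R_scope.

(* For y in [1,2] put t = y - 1.  The branches of k steps of the Lehner map compose
   to a unimodular integer Moebius map sending L^k y - 1 to y - 1 whose lower row
   (c, d) has c + d >= k + 1; hence two points sharing k digits are 1/(k+1)-close and
   the digit sequence determines the point.  If the digits are eventually periodic,
   L^N alpha is a fixed point of such a map, so it is quadratic, and so is alpha.
   Conversely, if alpha is a root of an integer quadratic form, each L^n alpha is a
   root of a transformed form of the same discriminant whose other root w_n is the
   conjugate.  Either some w_n leaves [1,2]; then w_m < 1 < L^m alpha for all later m,
   which confines the forms to a finite box, so the orbit of alpha repeats.  Or every
   w_n stays in [1,2]; then w follows the same branches as alpha, so w and alpha have
   the same digits and coincide, impossible for irrational alpha. *)

Local Notation L := lehner_map.

Lemma inv_between_1_2 y : 0 < y -> (1 <= / y <= 2 <-> 1/2 <= y <= 1).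
Proof.
  intros Hy. assert (Hyy : y * / y = 1) by (field; lra).
  assert (0 < / y) by (apply Rinv_0_lt_compat; lra).
  split; intros [H1 H2]; split; nra.
Qed.

Lemma inv_lt_1 t : t < 0 \/ 1 < t -> / t < 1.
Proof.
  intros [Ht | Ht].
  - pose proof (Rinv_lt_0_compat t Ht). lra.
  - assert (t * / t = 1) by (field; lra).
    assert (0 < / t) by (apply Rinv_0_lt_compat; lra). nra.
Qed.

Lemma lehner_map_range x : 1 <= x <= 2 -> 1 <= L x <= 2.
Proof.
  intros Hx. unfold lehner_map. destruct (Rlt_dec x (3/2));
    apply inv_between_1_2; lra.
Qed.

Lemma lehner_iter_range n x : 1 <= x <= 2 -> 1 <= Nat.iter n L x <= 2.
Proof. intros Hx; induction n; simpl; auto using lehner_map_range. Qed.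

Lemma lehner_digit_cases x n :
  let y := Nat.iter n L x in
  lehner_digit x n = (2%Z, (-1)%Z) /\ y < 3/2 /\ L y = / (2 - y) \/
  lehner_digit x n = (1%Z, 1%Z) /\ 3/2 <= y /\ L y = / (y - 1).
Proof.
  intros y. unfold lehner_digit. fold y. unfold lehner_map at 1 2.
  destruct (Rlt_dec y (3/2)); [left | right]; repeat split; lra.
Qed.

Lemma lehner_map_digit x n a e :
  lehner_digit x n = (a, e) ->
  (e * e = 1)%Z /\
  Nat.iter (S n) L x = IZR e / (Nat.iter n L x - IZR a) /\
  Nat.iter n L x = IZR a + IZR e / Nat.iter (S n) L x.
Proof.
  simpl. destruct (lehner_digit_cases x n) as [(E & Hy & HL) | (E & Hy & HL)];
    rewrite E; intros [= <- <-]; rewrite HL; repeat split; try field; lra.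
Qed.

Lemma lehner_digit_iter x m i :
  lehner_digit (Nat.iter m L x) i = lehner_digit x (i + m).
Proof. unfold lehner_digit. now rewrite Nat.iter_add. Qed.

Lemma lehner_periodic_of_repeat x n m : (n < m)%nat ->
  Nat.iter n L x = Nat.iter m L x -> eventually_periodic (lehner_digit x).
Proof.
  intros Hnm E. exists n, (m - n)%nat. split; [lia|]. intros i Hi.
  replace (i + (m - n))%nat with ((i - n) + m)%nat by lia.
  replace i with ((i - n) + n)%nat at 2 by lia.
  now rewrite <- !lehner_digit_iter, E.
Qed.

Definition rational (x : R) : Prop :=
  exists p q : Z, q <> 0%Z /\ x = IZR p / IZR q.

Lemma irrational_not_rational x : irrational x <-> ~ rational x.
Proof.
  split.
  - intros Hx (p & q & Hq & E). exact (Hx p q Hq E).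
  - intros Hx p q Hq E. apply Hx. exists p, q. auto.
Qed.

Lemma irrational_neq_IZR x z : irrational x -> x <> IZR z.
Proof. intros Hx E. apply (Hx z 1%Z); [lia|]. rewrite E. field. Qed.

Lemma rational_IZR z : rational (IZR z).
Proof. exists z, 1%Z. split; [lia | field]. Qed.

Lemma rational_plus x y : rational x -> rational y -> rational (x + y).
Proof.
  intros (p & q & Hq & ->) (p' & q' & Hq' & ->).
  exists (p * q' + p' * q)%Z, (q * q')%Z. split; [lia|].
  rewrite plus_IZR, !mult_IZR. field. split; apply not_0_IZR; auto.
Qed.

Lemma rational_mult x y : rational x -> rational y -> rational (x * y).
Proof.
  intros (p & q & Hq & ->) (p' & q' & Hq' & ->).
  exists (p * p')%Z, (q * q')%Z. split; [lia|].
  rewrite !mult_IZR. field. split; apply not_0_IZR; auto.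
Qed.

Lemma rational_inv x : rational x -> rational (/ x).
Proof.
  intros (p & q & Hq & ->). destruct (Z.eq_dec p 0) as [-> | Hp].
  - exists 0%Z, 1%Z. split; [lia|]. rewrite Rdiv_0_l, Rinv_0. field.
  - exists q, p. split; auto. field. split; apply not_0_IZR; auto.
Qed.

Lemma rational_of_linear_root p q u : p <> 0%Z -> IZR p * u + IZR q = 0 -> rational u.
Proof.
  intros Hp E. assert (HpR : IZR p <> 0) by now apply not_0_IZR.
  exists (- q)%Z, p. split; auto. rewrite opp_IZR.
  apply (Rmult_eq_reg_l (IZR p)); auto. field_simplify; auto. lra.
Qed.

Lemma rational_digit_step a e y :
  rational y -> rational (IZR a + IZR e / y).
Proof.
  intros Hy. apply rational_plus; [apply rational_IZR|].
  apply rational_mult; [apply rational_IZR | now apply rational_inv].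
Qed.

Lemma lehner_iter_irrational x n : irrational x -> irrational (Nat.iter n L x).
Proof.
  rewrite !irrational_not_rational. intros Hx. induction n as [|n IH]; auto.
  intros Hr. apply IH. destruct (lehner_digit x n) as [a e] eqn:Hd.
  destruct (lehner_map_digit x n a e Hd) as (_ & _ & ->).
  now apply rational_digit_step.
Qed.

(** * The digits determine the point *)

Lemma mobius_compose_left_branch (u s a b c d : R) : s < 3/2 ->
  u * (c * (s - 1) + d) = a * (s - 1) + b ->
  u * ((c + d) * (/ (2 - s) - 1) + d) = (a + b) * (/ (2 - s) - 1) + b.
Proof.
  intros Hs E.
  transitivity (u * (c * (s - 1) + d) / (2 - s)); [field | rewrite E; field]; lra.
Qed.

Lemma mobius_compose_right_branch (u s a b c d : R) : 3/2 <= s ->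
  u * (c * (s - 1) + d) = a * (s - 1) + b ->
  u * (d * (/ (s - 1) - 1) + (c + d)) = b * (/ (s - 1) - 1) + (a + b).
Proof.
  intros Hs E.
  transitivity (u * (c * (s - 1) + d) / (s - 1)); [field | rewrite E; field]; lra.
Qed.

Lemma lehner_common_mobius (y z : R) (k : nat) :
  (forall i, (i < k)%nat -> lehner_digit y i = lehner_digit z i) ->
  exists a b c d : Z, (0 <= c)%Z /\ (1 <= d)%Z /\ (Z.of_nat k + 1 <= c + d)%Z /\
    (a * d - b * c = 1 \/ a * d - b * c = -1)%Z /\
    (y - 1) * (IZR c * (Nat.iter k L y - 1) + IZR d) = IZR a * (Nat.iter k L y - 1) + IZR b /\
    (z - 1) * (IZR c * (Nat.iter k L z - 1) + IZR d) = IZR a * (Nat.iter k L z - 1) + IZR b.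
Proof.
  induction k as [|k IH]; intros Hdig.
  - exists 1%Z, 0%Z, 0%Z, 1%Z. simpl. repeat split; try lia; ring.
  - destruct IH as (a & b & c & d & Hc & Hd & Hcd & Hdet & Ey & Ez).
    { intros i Hi. apply Hdig. lia. }
    pose proof (Hdig k ltac:(lia)) as Hk.
    destruct (lehner_digit_cases y k) as [(Dy & Ry & HLy) | (Dy & Ry & HLy)];
    destruct (lehner_digit_cases z k) as [(Dz & Rz & HLz) | (Dz & Rz & HLz)];
      rewrite Dy, Dz in Hk; try discriminate Hk; simpl Nat.iter; rewrite HLy, HLz.
    + exists (a + b)%Z, b, (c + d)%Z, d. rewrite !plus_IZR.
      repeat split; try lia; now apply mobius_compose_left_branch.
    + exists b, (a + b)%Z, d, (c + d)%Z. rewrite !plus_IZR.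
      repeat split; try lia; now apply mobius_compose_right_branch.
Qed.

Lemma mobius_gap (u v t t' a b c d : R) :
  0 <= t <= 1 -> 0 <= t' <= 1 -> 0 <= c -> 1 <= d ->
  (a * d - b * c = 1 \/ a * d - b * c = -1) ->
  u * (c * t + d) = a * t + b -> v * (c * t' + d) = a * t' + b ->
  Rabs (u - v) * (c + d) <= 1.
Proof.
  intros Ht Ht' Hc Hd Hdet Eu Ev.
  set (X := (c * t + d) * (c * t' + d)).
  assert (HX : 1 <= X).
  { assert (1 <= c * t + d) by nra. assert (1 <= c * t' + d) by nra. unfold X; nra. }
  assert (Huv : (u - v) * X = (a * d - b * c) * (t - t')).
  { replace ((u - v) * X) with
      ((u * (c * t + d)) * (c * t' + d) - (v * (c * t' + d)) * (c * t + d)) by (unfold X; ring).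
    rewrite Eu, Ev. ring. }
  assert (HuvX : Rabs (u - v) * X = Rabs (t - t')).
  { rewrite <- (Rabs_pos_eq X), <- Rabs_mult, Huv, Rabs_mult by lra.
    destruct Hdet as [-> | ->]; rewrite Rabs_Zabs; simpl; ring. }
  assert (Hgap : Rabs (t - t') * (c + d) <= X).
  { assert (0 <= c * t) by (apply Rmult_le_pos; lra).
    assert (0 <= c * t') by (apply Rmult_le_pos; lra).
    assert (0 <= c * t * t') by (apply Rmult_le_pos; lra).
    assert (0 <= c * t * (d - 1)) by (apply Rmult_le_pos; lra).
    assert (0 <= c * t' * (d - 1)) by (apply Rmult_le_pos; lra).
    unfold X. destruct (Rle_dec t' t).
    - rewrite Rabs_pos_eq by lra. nra.
    - rewrite Rabs_left by lra. nra. }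
  pose proof (Rabs_pos (u - v)).
  apply (Rmult_le_reg_r X); nra.
Qed.

Lemma nonneg_bounded_multiples_eq0 r :
  0 <= r -> (forall k : nat, r * (INR k + 1) <= 1) -> r = 0.
Proof.
  intros Hr H. destruct (Rle_lt_or_eq_dec 0 r Hr) as [Hpos | <-]; auto. exfalso.
  destruct (archimed (/ r)) as [Hup _].
  assert (Hup0 : (0 < up (/ r))%Z).
  { apply lt_IZR. pose proof (Rinv_0_lt_compat r Hpos). lra. }
  specialize (H (Z.to_nat (up (/ r)))). rewrite INR_IZR_INZ, Z2Nat.id in H by lia.
  assert (r * / r = 1) by (field; lra). nra.
Qed.

Lemma lehner_digit_inj y z : 1 <= y <= 2 -> 1 <= z <= 2 ->
  (forall i, lehner_digit y i = lehner_digit z i) -> y = z.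
Proof.
  intros Hy Hz Hdig.
  enough (Hyz : Rabs (y - z) = 0).
  { destruct (Req_dec (y - z) 0) as [E | E]; [lra | now apply Rabs_no_R0 in E]. }
  apply nonneg_bounded_multiples_eq0; [apply Rabs_pos|]. intros k.
  destruct (lehner_common_mobius y z k (fun i _ => Hdig i))
    as (a & b & c & d & Hc & Hd & Hcd & Hdet & Ey & Ez).
  pose proof (lehner_iter_range k y Hy). pose proof (lehner_iter_range k z Hz).
  apply Rle_trans with (Rabs (y - z) * (IZR c + IZR d)).
  - apply Rmult_le_compat_l; [apply Rabs_pos|].
    rewrite INR_IZR_INZ, <- !plus_IZR. apply IZR_le. lia.
  - replace (y - z) with ((y - 1) - (z - 1)) by ring.
    apply (mobius_gap _ _ (Nat.iter k L y - 1) (Nat.iter k L z - 1) (IZR a) (IZR b) (IZR c) (IZR d));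
      auto; try lra; try (apply IZR_le; lia).
    rewrite <- !mult_IZR, <- minus_IZR. destruct Hdet as [-> | ->]; auto.
Qed.

(** * Periodic digits give a quadratic irrational *)

Definition quadratic_root (x : R) : Prop :=
  exists A B C : Z, A <> 0%Z /\ IZR A * x ^ 2 + IZR B * x + IZR C = 0.

Lemma lehner_periodic_point_quadratic y p :
  (0 < p)%nat -> Nat.iter p L y = y -> quadratic_root y.
Proof.
  intros Hp Hy.
  destruct (lehner_common_mobius y y p (fun _ _ => eq_refl))
    as (a & b & c & d & Hc & Hd & Hcd & Hdet & E & _).
  rewrite Hy in E.
  exists c, (d - a - 2 * c)%Z, (c - d + a - b)%Z. split.
  - intros ->. assert (Hd2 : (2 <= d)%Z) by lia. rewrite Z.mul_0_r, Z.sub_0_r in Hdet.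
    destruct (Z.lt_trichotomy a 0) as [Ha | [-> | Ha]]; [| lia |].
    + assert (a * d <= -2)%Z by nia. lia.
    + assert (2 <= a * d)%Z by nia. lia.
  - rewrite !minus_IZR, !mult_IZR, !plus_IZR, minus_IZR.
    replace (IZR c * y ^ 2 + (IZR d - IZR a - 2 * IZR c) * y + (IZR c - IZR d + IZR a - IZR b))
      with ((y - 1) * (IZR c * (y - 1) + IZR d) - (IZR a * (y - 1) + IZR b)) by ring.
    rewrite E. ring.
Qed.

Lemma quadratic_root_lehner_pred x n :
  irrational (Nat.iter n L x) -> quadratic_root (Nat.iter (S n) L x) ->
  quadratic_root (Nat.iter n L x).
Proof.
  rewrite irrational_not_rational. intros Hx (A & B & C & HA & E).
  destruct (lehner_digit x n) as [a e] eqn:Hd.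
  destruct (lehner_map_digit x n a e Hd) as (He & Hnext & _).
  set (u := Nat.iter n L x) in *. set (v := Nat.iter (S n) L x) in *.
  assert (Hua : u - IZR a <> 0).
  { intros H. apply Hx. replace u with (IZR a) by lra. apply rational_IZR. }
  assert (HeR : IZR e * IZR e = 1) by (rewrite <- mult_IZR, He; reflexivity).
  assert (Eu : IZR A + IZR B * IZR e * (u - IZR a) + IZR C * (u - IZR a) ^ 2 = 0).
  { assert (Hv : v * (u - IZR a) = IZR e) by (rewrite Hnext; field; auto).
    transitivity (IZR A * (v * (u - IZR a)) ^ 2 + IZR B * (v * (u - IZR a)) * (u - IZR a)
                  + IZR C * (u - IZR a) ^ 2).
    - rewrite Hv. replace (IZR e ^ 2) with 1 by (rewrite <- HeR; ring). ring.
    - replace 0 with (0 * (u - IZR a) ^ 2) by ring. rewrite <- E. ring. }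
  exists C, (B * e - 2 * C * a)%Z, (A - B * e * a + C * a * a)%Z. split.
  - intros ->. apply Hx, (rational_of_linear_root (B * e) (A - B * e * a)).
    + intros HBe. apply HA, eq_IZR. rewrite <- Eu, <- mult_IZR, HBe. ring.
    + rewrite minus_IZR, !mult_IZR, <- Eu. ring.
  - rewrite minus_IZR, plus_IZR, minus_IZR, !mult_IZR. rewrite <- Eu. ring.
Qed.

Lemma quadratic_root_lehner_iter x n :
  irrational x -> quadratic_root (Nat.iter n L x) -> quadratic_root x.
Proof.
  intros Hx. induction n as [|n IH]; auto. intros Hq.
  apply IH, quadratic_root_lehner_pred; auto using lehner_iter_irrational.
Qed.

Lemma lehner_periodic_quadratic_irrational x : 1 <= x <= 2 -> irrational x ->
  eventually_periodic (lehner_digit x) -> quadratic_irrational x.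
Proof.
  intros Hx Hirr (N & p & Hp & Hper). split; auto.
  set (y := Nat.iter N L x).
  assert (Hy : 1 <= y <= 2) by now apply lehner_iter_range.
  assert (Hfix : Nat.iter p L y = y).
  { apply lehner_digit_inj; auto using lehner_iter_range. intros i.
    unfold y. rewrite !lehner_digit_iter, <- (Hper (i + N)%nat) by lia.
    f_equal. lia. }
  apply (quadratic_root_lehner_iter x N); auto.
  now apply (lehner_periodic_point_quadratic y p).
Qed.

(** * Integer quadratic forms along the orbit *)

Definition qform := (Z * Z * Z)%type.

Definition qform_discr (f : qform) : Z :=
  let '(A, B, C) := f in (B * B - 4 * A * C)%Z.

Definition has_roots (f : qform) (x w : R) : Prop :=
  let '(A, B, C) := f in
  A <> 0%Z /\ IZR B = - IZR A * (x + w) /\ IZR C = IZR A * x * w.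

(* The form satisfied by [y] when [x] is a root of [f] and [x = a + e / y]. *)
Definition qform_step (d : Z * Z) (f : qform) : qform :=
  let '(a, e) := d in let '(A, B, C) := f in
  (A * a * a + B * a + C, e * (2 * A * a + B), A)%Z.

Lemma qform_step_discr a e f :
  (e * e = 1)%Z -> qform_discr (qform_step (a, e) f) = qform_discr f.
Proof.
  destruct f as [[A B] C]. cbn [qform_discr qform_step]. intros He.
  transitivity (e * e * ((2 * A * a + B) * (2 * A * a + B)) - 4 * (A * a * a + B * a + C) * A)%Z;
    [ring | rewrite He; ring].
Qed.

Lemma has_roots_step a e f x w y v :
  (e * e = 1)%Z -> y <> 0 -> v <> 0 ->
  x = IZR a + IZR e / y -> w = IZR a + IZR e / v ->
  has_roots f x w -> has_roots (qform_step (a, e) f) y v.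
Proof.
  destruct f as [[A B] C]. cbn [has_roots qform_step]. intros He Hy Hv -> -> (HA & HB & HC).
  assert (HAR : IZR A <> 0) by now apply not_0_IZR.
  assert (Hlead : IZR (A * a * a + B * a + C) = IZR A / (y * v)).
  { rewrite !plus_IZR, !mult_IZR, HB, HC.
    destruct (Z.eq_dec e 1) as [-> | He1]; [field; auto|].
    replace e with (-1)%Z by nia. field; auto. }
  repeat split.
  - intros H. apply (f_equal IZR) in H. rewrite Hlead in H.
    apply HAR. apply (Rmult_eq_reg_r (/ (y * v))); [lra|].
    apply Rinv_neq_0_compat, Rmult_integral_contrapositive; auto.
  - rewrite Hlead, !mult_IZR, plus_IZR, !mult_IZR, HB.
    destruct (Z.eq_dec e 1) as [-> | He1]; [field; auto|].
    replace e with (-1)%Z by nia. field; auto.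
  - rewrite Hlead. field; auto.
Qed.

Lemma has_roots_sum_rational f x w : has_roots f x w -> rational (x + w).
Proof.
  destruct f as [[A B] C]. intros (HA & HB & _).
  exists (- B)%Z, A. split; auto.
  rewrite opp_IZR, HB. field. now apply not_0_IZR.
Qed.

Lemma has_roots_conj_irrational f x w :
  has_roots f x w -> irrational x -> irrational w.
Proof.
  rewrite !irrational_not_rational. intros Hf Hx Hw. apply Hx.
  replace x with ((x + w) + IZR (-1) * w) by (simpl; ring).
  apply rational_plus; [now apply (has_roots_sum_rational f) |].
  apply rational_mult; auto using rational_IZR.
Qed.

Lemma has_roots_double_rational f x : has_roots f x x -> rational x.
Proof.
  intros Hf. replace x with ((x + x) * / IZR 2) by (simpl; field).
  apply rational_mult; [now apply (has_roots_sum_rational f) |].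
  apply rational_inv, rational_IZR.
Qed.

Lemma has_roots_eq f x w x' w' :
  has_roots f x w -> has_roots f x' w' -> x' = x \/ x' = w.
Proof.
  destruct f as [[A B] C]. intros (HA & HB & HC) (_ & HB' & HC').
  assert (HAR : IZR A <> 0) by now apply not_0_IZR.
  assert (Hsum : x + w = x' + w') by (apply (Rmult_eq_reg_l (- IZR A)); [lra | lra]).
  assert (Hprod : x * w = x' * w').
  { apply (Rmult_eq_reg_l (IZR A)); auto. rewrite <- !Rmult_assoc. lra. }
  assert (H : (x' - x) * (x' - w) = 0) by nra.
  apply Rmult_integral in H. lra.
Qed.

Lemma has_roots_sign_at_1 A B C x w :
  has_roots (A, B, C) x w -> 1 < x -> w < 1 -> (A * (A + B + C) < 0)%Z.
Proof.
  intros (HA & HB & HC) Hx Hw. apply lt_IZR.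
  assert (HAR : IZR A <> 0) by now apply not_0_IZR.
  rewrite mult_IZR, !plus_IZR, HB, HC.
  replace (IZR A * (IZR A + - IZR A * (x + w) + IZR A * x * w))
    with (- (IZR A * IZR A) * ((x - 1) * (1 - w))) by ring.
  assert (0 < IZR A * IZR A) by nra.
  assert (0 < (x - 1) * (1 - w)) by nra. nra.
Qed.

(* [B^2 - 4AC = (2A+B)^2 - 4 A f(1)], so [A f(1) < 0] bounds every coefficient. *)
Lemma qform_bounded_of_sign_at_1 A B C :
  (A * (A + B + C) < 0)%Z ->
  (Z.abs A <= 5 * qform_discr (A, B, C) /\ Z.abs B <= 5 * qform_discr (A, B, C) /\
   Z.abs C <= 5 * qform_discr (A, B, C))%Z.
Proof.
  intros Hneg. cbn [qform_discr].
  assert (HD : (B * B - 4 * A * C = (2 * A + B) * (2 * A + B) - 4 * (A * (A + B + C)))%Z) by ring.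
  assert (H1 : (1 <= Z.abs A)%Z) by (destruct (Z.eq_dec A 0) as [E | ]; [rewrite E in Hneg |]; lia).
  assert (H2 : (1 <= Z.abs (A + B + C))%Z)
    by (destruct (Z.eq_dec (A + B + C) 0) as [E | ]; [rewrite E in Hneg |]; lia).
  assert (HA : (Z.abs A <= Z.abs (A * (A + B + C)))%Z) by (rewrite Z.abs_mul; nia).
  assert (Hf1 : (Z.abs (A + B + C) <= Z.abs (A * (A + B + C)))%Z) by (rewrite Z.abs_mul; nia).
  assert (Hm : (Z.abs (2 * A + B) <= (2 * A + B) * (2 * A + B))%Z)
    by (rewrite <- Z.abs_square; nia).
  lia.
Qed.

(** * Quadratic irrationals have eventually periodic digits *)

Lemma pigeonhole_infinite {T : Type} (P : nat -> Prop) (f : nat -> T) (l : list T) :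
  (forall n, exists m, (n <= m)%nat /\ P m) ->
  (forall m, P m -> In (f m) l) ->
  exists n m, P n /\ (n < m)%nat /\ f n = f m.
Proof.
  intros Hinf Hin. apply NNPP. intros Hno.
  assert (Hlists : forall j, exists ns : list nat,
             length ns = j /\ NoDup (map f ns) /\ Forall P ns).
  { induction j as [|j (ns & Hlen & Hnd & HS)].
    - exists nil. repeat constructor.
    - destruct (Hinf (S (list_max ns))) as (m & Hm & Sm).
      exists (m :: ns). simpl. repeat split; auto.
      constructor; auto. intros Hfm. apply in_map_iff in Hfm as (n & Efn & Hn).
      apply Hno. exists n, m. repeat split.
      + now rewrite Forall_forall in HS; apply HS.
      + assert (Hmax := proj1 (list_max_le ns (list_max ns)) (le_n _)).
        rewrite Forall_forall in Hmax. specialize (Hmax n Hn). lia.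
      + auto. }
  destruct (Hlists (S (length l))) as (ns & Hlen & Hnd & HS).
  assert (Hincl : incl (map f ns) l).
  { intros t Ht. apply in_map_iff in Ht as (n & <- & Hn).
    rewrite Forall_forall in HS. auto. }
  apply NoDup_incl_length in Hincl; auto. rewrite length_map in Hincl. lia.
Qed.

Definition zrange (K : Z) : list Z :=
  map (fun i => (Z.of_nat i - K)%Z) (seq 0 (Z.to_nat (2 * K + 1))).

Lemma in_zrange K z : (Z.abs z <= K)%Z -> In z (zrange K).
Proof.
  intros H. apply in_map_iff. exists (Z.to_nat (z + K)). split.
  - rewrite Z2Nat.id by lia. lia.
  - apply in_seq. lia.
Qed.

Definition qform_box (K : Z) : list qform :=
  list_prod (list_prod (zrange K) (zrange K)) (zrange K).

Lemma in_qform_box K A B C :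
  (Z.abs A <= K /\ Z.abs B <= K /\ Z.abs C <= K)%Z -> In (A, B, C) (qform_box K).
Proof.
  intros (HA & HB & HC). apply in_prod; [apply in_prod|]; now apply in_zrange.
Qed.

Fixpoint lehner_qform (f : qform) (x : R) (n : nat) : qform :=
  match n with
  | O => f
  | S n => qform_step (lehner_digit x n) (lehner_qform f x n)
  end.

(* The Galois conjugate of [L^n x], transported through the branches taken by [x]. *)
Fixpoint lehner_conjugate (w x : R) (n : nat) : R :=
  match n with
  | O => w
  | S n =>
      IZR (snd (lehner_digit x n)) / (lehner_conjugate w x n - IZR (fst (lehner_digit x n)))
  end.

Lemma conjugate_escape x n w : w < 1 \/ 2 < w ->
  IZR (snd (lehner_digit x n)) / (w - IZR (fst (lehner_digit x n))) < 1.
Proof.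
  intros Hw. destruct (lehner_digit_cases x n) as [(-> & _) | (-> & _)]; simpl.
  - replace (-1 / (w - 2)) with (/ (2 - w)) by (field; lra). apply inv_lt_1. lra.
  - rewrite Rdiv_1_l. apply inv_lt_1. lra.
Qed.

Lemma conjugate_trapped x n w : 1 <= w <= 2 -> irrational w ->
  1 <= IZR (snd (lehner_digit x n)) / (w - IZR (fst (lehner_digit x n))) <= 2 ->
  lehner_digit x n = lehner_digit w 0.
Proof.
  intros Hw Hirr.
  assert (H32 : w <> 3/2) by (apply (Hirr 3%Z 2%Z); lia).
  pose proof (irrational_neq_IZR w 1 Hirr). pose proof (irrational_neq_IZR w 2 Hirr).
  destruct (lehner_digit_cases w 0) as [(-> & Hw' & _) | (-> & Hw' & _)]; simpl in Hw';
  destruct (lehner_digit_cases x n) as [(-> & _) | (-> & _)]; simpl; auto; intros Hstep.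
  - rewrite Rdiv_1_l, inv_between_1_2 in Hstep; lra.
  - replace (-1 / (w - 2)) with (/ (2 - w)) in Hstep by (field; lra).
    rewrite inv_between_1_2 in Hstep; lra.
Qed.

Section ConjugateOrbit.

Variables (x w : R) (f : qform).
Hypothesis Hx : 1 <= x <= 2.
Hypothesis Hirr : irrational x.
Hypothesis Hf : has_roots f x w.

Local Notation xs n := (Nat.iter n L x).
Local Notation ws n := (lehner_conjugate w x n).
Local Notation fs n := (lehner_qform f x n).

Lemma lehner_qform_roots n : has_roots (fs n) (xs n) (ws n) /\ irrational (ws n).
Proof.
  induction n as [|n [Hroots Hwirr]].
  - split; auto. now apply (has_roots_conj_irrational f x).
  - simpl lehner_qform. simpl lehner_conjugate.
    destruct (lehner_digit x n) as [a e] eqn:Hd. simpl fst; simpl snd.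
    destruct (lehner_map_digit x n a e Hd) as (He & _ & Hcur).
    assert (He0 : IZR e <> 0) by (intros H; apply eq_IZR in H; subst; lia).
    assert (Hwa : ws n - IZR a <> 0) by (pose proof (irrational_neq_IZR _ a Hwirr); lra).
    assert (Hprev : ws n = IZR a + IZR e / (IZR e / (ws n - IZR a)))
      by (field; auto).
    split.
    + apply (has_roots_step a e (fs n) (xs n) (ws n)); auto.
      * pose proof (lehner_iter_range (S n) x Hx). lra.
      * unfold Rdiv. apply Rmult_integral_contrapositive. split; auto.
        now apply Rinv_neq_0_compat.
    + rewrite irrational_not_rational in *. intros Hr. apply Hwirr.
      rewrite Hprev. now apply rational_digit_step.
Qed.

Lemma lehner_qform_discr n : qform_discr (fs n) = qform_discr f.
Proof.
  induction n as [|n IH]; auto. simpl lehner_qform.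
  destruct (lehner_digit x n) as [a e] eqn:Hd.
  destruct (lehner_map_digit x n a e Hd) as (He & _).
  now rewrite qform_step_discr.
Qed.

Lemma lehner_conjugate_escape n0 : ws n0 < 1 \/ 2 < ws n0 ->
  forall m, (n0 < m)%nat -> ws m < 1.
Proof.
  intros Hn0. induction 1 as [|m Hm IH]; apply conjugate_escape; auto.
Qed.

Lemma lehner_periodic_of_escape n0 : ws n0 < 1 \/ 2 < ws n0 ->
  eventually_periodic (lehner_digit x).
Proof.
  intros Hn0.
  assert (Hxs : forall m, 1 < xs m).
  { intros m. pose proof (lehner_iter_range m x Hx).
    pose proof (irrational_neq_IZR _ 1 (lehner_iter_irrational x m Hirr)). lra. }
  destruct (pigeonhole_infinite (fun m => (n0 < m)%nat) (fun m => fs m)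
              (qform_box (5 * qform_discr f))) as (n & m & Hn & Hnm & E).
  - intros n. exists (S (Nat.max n n0)). split; lia.
  - intros m Hm. destruct (lehner_qform_roots m) as [Hroots _].
    rewrite <- (lehner_qform_discr m). destruct (fs m) as [[A B] C].
    apply in_qform_box, qform_bounded_of_sign_at_1, (has_roots_sign_at_1 A B C (xs m) (ws m)); auto.
    now apply (lehner_conjugate_escape n0).
  - apply (lehner_periodic_of_repeat x n m Hnm). symmetry.
    destruct (lehner_qform_roots n) as [Hroots_n _]. destruct (lehner_qform_roots m) as [Hroots_m _].
    simpl in E. rewrite E in Hroots_n.
    destruct (has_roots_eq _ _ _ _ _ Hroots_n Hroots_m) as [| Hws]; auto.
    pose proof (Hxs m). pose proof (lehner_conjugate_escape n0 Hn0 n Hn). lra.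
Qed.

Lemma lehner_conjugate_not_trapped : ~ (forall n, 1 <= ws n <= 2).
Proof.
  intros Htrap.
  assert (Hdig : forall n, lehner_digit x n = lehner_digit (ws n) 0).
  { intros n. apply conjugate_trapped; auto.
    - apply lehner_qform_roots.
    - apply (Htrap (S n)). }
  assert (Horbit : forall n, ws n = Nat.iter n L w).
  { induction n as [|n IH]; auto. simpl lehner_conjugate. rewrite Hdig.
    destruct (lehner_digit (ws n) 0) as [a e] eqn:Hd.
    destruct (lehner_map_digit (ws n) 0 a e Hd) as (_ & Hnext & _).
    simpl in Hnext |- *. now rewrite <- Hnext, IH. }
  assert (Hwx : w = x).
  { apply lehner_digit_inj; auto. apply (Htrap 0%nat). intros i.
    rewrite Hdig, Horbit. apply (lehner_digit_iter w i 0). }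
  subst w. apply irrational_not_rational in Hirr. apply Hirr.
  now apply (has_roots_double_rational f).
Qed.

End ConjugateOrbit.

Lemma lehner_quadratic_irrational_periodic x : 1 <= x <= 2 ->
  quadratic_irrational x -> eventually_periodic (lehner_digit x).
Proof.
  intros Hx [Hirr (A & B & C & HA & E)].
  assert (HAR : IZR A <> 0) by now apply not_0_IZR.
  set (w := - IZR B / IZR A - x).
  assert (Hf : has_roots (A, B, C) x w).
  { cbn [has_roots]. unfold w. repeat split; auto; [field; auto |].
    apply (Rplus_eq_reg_r (IZR A * x ^ 2 + IZR B * x)). rewrite Rplus_comm, E. field. auto. }
  destruct (classic (exists n, lehner_conjugate w x n < 1 \/ 2 < lehner_conjugate w x n))
    as [[n0 Hn0] | Hnone].
  - exact (lehner_periodic_of_escape x w (A, B, C) Hx Hirr Hf n0 Hn0).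
  - exfalso. apply (lehner_conjugate_not_trapped x w (A, B, C) Hx Hirr Hf). intros n.
    assert (~ (lehner_conjugate w x n < 1 \/ 2 < lehner_conjugate w x n)) by eauto. lra.
Qed.

Theorem proposition6p4 (alpha : R) :
  1 < alpha < 2 -> irrational alpha ->
  (eventually_periodic (lehner_digit alpha) <-> quadratic_irrational alpha).
Proof.
  intros Ha Hirr. split.
  - apply lehner_periodic_quadratic_irrational; auto. lra.
  - apply lehner_quadratic_irrational_periodic. lra.
Qed.
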